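(* Let $(Y,\preceq,\prec,\to)$ be a solid vector space, let $b\in Y$ with $b\succ0$, and let $\|\cdot\|$ be the Minkowski functional of $[-b,b]$. Then: (i) the monotone norm $\|\cdot\|$ generates the order topology on $Y$; (ii) for a sequence $(x_n)$ in $Y$, $x_n\to x$ implies $\|x_n-x\|\to0$.
   Context: Vector space with convergence: a real vector space $Y$ with a relation $\to$ between sequences in $Y$ and points of $Y$ (uniqueness of limits not assumed) such that (C1) $x_n\to x$, $y_n\to y$ imply $x_n+y_n\to x+y$; (C2) $x_n\to x$, $\lambda\in\mathbb R$ imply $\lambda x_n\to\lambda x$; (C3) $\lambda_n\to\lambda$ in $\mathbb R$ imply $\lambda_n x\to\lambda x$. $A\subseteq Y$ is open if $x_n\to x\in A$ implies $x_n\in A$ for all but finitely many $n$; closed if $x_n\to x$, $x_n\in A$ $\forall n$ imply $x\in A$; $A^\circ$ is the union of all open subsets of $A$. A cone is a nonempty closed $K$ with $\lambda K\subseteq K$ ($\lambda\ge0$), $K+K\subseteq K$, $K\cap(-K)=\{0\}$; solid if $K\ne\{0\}$, $K^\circ\ne\emptyset$. A vector ordering is a partial order $\preceq$ with (V1) $x\preceq y\Rightarrow x+z\preceq y+z$; (V2) $\lambda\ge0$, $x\preceq y\Rightarrow\lambda x\preceq\lambda y$; (V3) $x_n\to x$, $y_n\to y$, $x_n\preceq y_n$ $\forall n\Rightarrow x\preceq y$. Solid vector space: positive cone $K=\{x:x\succeq0\}$ solid, with $x\prec y$ iff $y-x\in K^\circ$. $[a,b]=\{x:a\preceq x\preceq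 b\}$; Minkowski functional of $A$: $\|x\|=\inf\{\lambda\ge0:x\in\lambda A\}$ (it is a norm for $A=[-b,b]$, $b\succ0$). Monotone norm: $\|x\|\le\|y\|$ whenever $0\preceq x\preceq y$. Order topology: the topology on $Y$ with basis the open intervals $(a,b)=\{x:a\prec x\prec b\}$, $a\prec b$. *)

From HB Require Import structures.
From mathcomp Require Import all_boot all_order all_algebra.
From mathcomp Require Import all_classical all_reals all_analysis.
Set Implicit Arguments. Unset Strict Implicit. Unset Printing Implicit Defensive.
Import Order.TTheory GRing.Theory Num.Theory numFieldNormedType.Exports.
Local Open Scope classical_set_scope.
Local Open Scope ring_scope.

Section Defs.
Variables (R : realType) (Y : lmodType R).
(* a convergence relation: conv xs x  means  xs --> x  (limits not unique) *)
Variable conv : (nat -> Y) -> Y -> Prop.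

Definition conv_space : Prop :=
  [/\ (forall (xs ys : nat -> Y) x y, conv xs x -> conv ys y ->
          conv (fun n => xs n + ys n) (x + y)),
      (forall (xs : nat -> Y) x (l : R), conv xs x ->
          conv (fun n => l *: xs n) (l *: x)) &
      (forall (ls : nat -> R) (l : R) (x : Y), ls @ \oo --> l ->
          conv (fun n => ls n *: x) (l *: x))].

Definition seq_open (A : set Y) : Prop :=
  forall xs x, conv xs x -> A x -> exists N, forall n, (N <= n)%N -> A (xs n).

Definition seq_closed (A : set Y) : Prop :=
  forall xs x, conv xs x -> (forall n, A (xs n)) -> A x.

Definition sinterior (A : set Y) : set Y :=
  [set x | exists U, [/\ seq_open U, U `<=` A & U x]].

Definition is_cone (K : set Y) : Prop :=
  [/\ K !=set0, seq_closed K,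
      (forall l x, 0 <= l -> K x -> K (l *: x)),
      (forall x y, K x -> K y -> K (x + y)) &
      (forall x, K x -> K (- x) -> x = 0)].

Definition solid_cone (K : set Y) : Prop :=
  [/\ is_cone K, K <> [set 0] & sinterior K !=set0].

Variable le : Y -> Y -> Prop.

Definition vector_ordering : Prop :=
  [/\ ((forall x, le x x) /\ (forall x y, le x y -> le y x -> x = y)),
      (forall x y z, le x y -> le y z -> le x z),
      (forall x y z, le x y -> le (x + z) (y + z)),
      (forall (l : R) x y, 0 <= l -> le x y -> le (l *: x) (l *: y)) &
      (forall xs ys x y, conv xs x -> conv ys y -> (forall n, le (xs n) (ys n)) ->
          le x y)].

Definition pos_cone : set Y := [set x | le 0 x].

Definition slt (x y : Y) : Prop := sinterior pos_cone (y - x).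

Definition solid_vector_space : Prop :=
  [/\ conv_space, vector_ordering & solid_cone pos_cone].

Definition ointerval (a b : Y) : set Y := [set x | slt a x /\ slt x b].

Definition ointerval_closed (a b : Y) : set Y := [set x | le a x /\ le x b].

Definition minkowski_functional (A : set Y) (x : Y) : R :=
  inf [set l : R | 0 <= l /\ exists a, A a /\ x = l *: a].

Definition norm_open (nm : Y -> R) (U : set Y) : Prop :=
  forall x, U x -> exists r : R, 0 < r /\ [set y | nm (y - x) < r] `<=` U.

(* order topology: open sets are unions of open intervals (a,b), a < b *)
Definition order_open (U : set Y) : Prop :=
  forall x, U x -> exists a b, [/\ slt a b, ointerval a b x & ointerval a b `<=` U].

End Defs.

From HB Require Import structures.
From mathcomp Require Import all_boot all_order all_algebra.
From mathcomp Require Import all_classical all_reals all_analysis.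
From mathcomp Require Import lra.

Set Implicit Arguments.
Unset Strict Implicit.
Unset Printing Implicit Defensive.
Import Order.TTheory GRing.Theory Num.Theory numFieldNormedType.Exports.
Local Open Scope classical_set_scope.
Local Open Scope ring_scope.

(* As b lies in the sequential interior K° of the positive cone and
   b - w/(n+1) -> b, every z satisfies -l b <= z <= l b for some l > 0: the
   Minkowski functional of [-b, b] is finite, and ||z|| < r forces
   -r b <= z <= r b.  Hence every ball around x contains the interval
   (x - r b/2, x + r b/2), while an interval (a, c) around x contains the ball
   of radius 1/(n+1) as soon as x - a - b/(n+1) and c - x - b/(n+1) are in K°.
   For (ii), xs n - x -> 0 puts e b +- (xs n - x) in K° eventually. *)

Section ConvergenceSpace.
Variables (R : realType) (Y : lmodType R) (conv : (nat -> Y) -> Y -> Prop).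
Hypothesis convY : conv_space conv.

Lemma conv_cst (x : Y) : conv (fun _ => x) x.
Proof.
case: convY => _ _ C3; have := C3 (fun _ => 1) 1 x (cvg_cst _).
by rewrite scale1r; apply.
Qed.

Lemma conv_opp (xs : nat -> Y) x : conv xs x -> conv (fun n => - xs n) (- x).
Proof.
case: convY => _ C2 _ /(C2 _ _ (-1)); rewrite scaleN1r.
by under eq_fun do rewrite scaleN1r.
Qed.

Lemma conv_addr (xs : nat -> Y) x z : conv xs x -> conv (fun n => xs n + z) (x + z).
Proof. by case: convY => C1 _ _ cx; exact: C1 cx (conv_cst z). Qed.

Lemma conv_addl (xs : nat -> Y) x z : conv xs x -> conv (fun n => z + xs n) (z + x).
Proof. by case: convY => C1 _ _ cx; exact: C1 (conv_cst z) cx. Qed.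

Lemma conv_subr_harmonic (u w : Y) : conv (fun n => u - harmonic n *: w) u.
Proof.
case: convY => _ _ C3.
have := conv_addl u (conv_opp (C3 _ _ w (@cvg_harmonic R))).
by rewrite scale0r oppr0 addr0.
Qed.

Lemma sinterior_sub (A : set Y) : sinterior conv A `<=` A.
Proof. by move=> x [U [_ + Ux]]; apply. Qed.

Lemma seq_open_sinterior (A : set Y) : seq_open conv (sinterior conv A).
Proof.
move=> xs x cx [U [oU UA Ux]]; have [N HN] := oU _ _ cx Ux.
by exists N => n /HN Un; exists U.
Qed.

End ConvergenceSpace.

Section OrderedConvergenceSpace.
Variables (R : realType) (Y : lmodType R) (conv : (nat -> Y) -> Y -> Prop).
Variable le : Y -> Y -> Prop.
Hypotheses (convY : conv_space conv) (ordY : vector_ordering conv le).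

Local Notation Kint := (sinterior conv (pos_cone le)).

Lemma le_trans_ord x y z : le x y -> le y z -> le x z.
Proof. by case: ordY => _ + _ _ _; apply. Qed.

Lemma le_addr_ord x y z : le x y -> le (x + z) (y + z).
Proof. by case: ordY => _ _ + _ _; apply. Qed.

Lemma le_scale_ord (l : R) x y : 0 <= l -> le x y -> le (l *: x) (l *: y).
Proof. by case: ordY => _ _ _ + _; apply. Qed.

Lemma subr_ge0_ord x y : le 0 (y - x) <-> le x y.
Proof.
split => [/(le_addr_ord x)|/(le_addr_ord (- x))]; first by rewrite add0r subrK.
by rewrite subrr.
Qed.

Lemma le_opp_ord x y : le x y -> le (- y) (- x).
Proof. by move/(le_addr_ord (- x - y)); rewrite addrA subrr add0r addrC subrK. Qed.

Lemma scaler_ge0_ord (l : R) x : 0 <= l -> le 0 x -> le 0 (l *: x).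
Proof. by move=> l0 /(le_scale_ord l0); rewrite scaler0. Qed.

Lemma le_scalel_ord (l t : R) v : le 0 v -> l <= t -> le (l *: v) (t *: v).
Proof.
move=> v0 lt; apply/subr_ge0_ord; rewrite -scalerBl.
by apply: scaler_ge0_ord; rewrite // subr_ge0.
Qed.

Lemma Kint_le u v : Kint u -> le u v -> Kint v.
Proof.
case: convY => C1 _ _ [U [oU UK Uu]] uv.
exists [set y | U (y - (v - u))]; split.
- by move=> xs x /(conv_addr convY (- (v - u))) cx /(oU _ _ cx).
- move=> y /UK /= hy.
  exact: le_trans_ord ((subr_ge0_ord _ _).2 uv) ((subr_ge0_ord _ _).1 hy).
- by rewrite /= opprB addrC subrK.
Qed.

Lemma Kint_scale (t : R) u : 0 < t -> Kint u -> Kint (t *: u).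
Proof.
case: convY => _ C2 _ t0 [U [oU UK Uu]]; exists [set y | U (t^-1 *: y)]; split.
- by move=> xs x /(C2 _ _ t^-1) cx /(oU _ _ cx).
- move=> y /UK /(le_scale_ord (ltW t0)).
  by rewrite scaler0 scalerA mulfV ?gt_eqF // scale1r.
- by rewrite /= scalerA mulVf ?gt_eqF // scale1r.
Qed.

Lemma conv_Kint_ev (ys : nat -> Y) y :
  conv ys y -> Kint y -> exists N, forall n, (N <= n)%N -> le 0 (ys n).
Proof.
move=> cy /(seq_open_sinterior cy) [N HN].
by exists N => n /HN /sinterior_sub.
Qed.

End OrderedConvergenceSpace.

Section OrderUnit.
Variables (R : realType) (Y : lmodType R) (conv : (nat -> Y) -> Y -> Prop).
Variable le : Y -> Y -> Prop.
Hypotheses (convY : conv_space conv) (ordY : vector_ordering conv le).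
Variable b : Y.
Hypothesis b_gt0 : slt conv le 0 b.

Local Notation Kint := (sinterior conv (pos_cone le)).
Local Notation nm := (minkowski_functional (ointerval_closed le (- b) b)).

Lemma Kint_b : Kint b.
Proof. by move: b_gt0; rewrite /slt subr0. Qed.

Lemma b_ge0 : le 0 b.
Proof. exact: sinterior_sub Kint_b. Qed.

Lemma order_unit (z : Y) : exists2 l : R, 0 < l & le (- (l *: b)) z /\ le z (l *: b).
Proof.
have [N1 H1] := conv_Kint_ev (conv_subr_harmonic convY b z) Kint_b.
have [N2 H2] := conv_Kint_ev (conv_subr_harmonic convY b (- z)) Kint_b.
pose N := maxn N1 N2; have l0 : 0 < N.+1%:R :> R by exact: ltr0Sn.
have bound_of_ge0 (v : Y) : le 0 (b - harmonic N *: v) -> le v (N.+1%:R *: b).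
  move=> /(scaler_ge0_ord ordY (ltW l0)).
  by rewrite scalerBr scalerA mulfV ?gt_eqF // scale1r => /(subr_ge0_ord ordY).
exists N.+1%:R => //; split; last exact: bound_of_ge0 (H1 N (leq_maxl _ _)).
by rewrite -[z]opprK; apply/(le_opp_ord ordY)/bound_of_ge0; exact: H2 (leq_maxr _ _).
Qed.

Let scalings (z : Y) : set R :=
  [set l | 0 <= l /\ exists a, ointerval_closed le (- b) b a /\ z = l *: a].

Lemma scalings_mem (z : Y) (l : R) :
  0 < l -> le (- (l *: b)) z -> le z (l *: b) -> scalings z l.
Proof.
move=> l0 zlo zhi; have li : 0 <= l^-1 by rewrite invr_ge0 ltW.
split; first exact: ltW.
exists (l^-1 *: z); split; last by rewrite scalerA mulfV ?gt_eqF // scale1r.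
split.
- by have := le_scale_ord ordY li zlo; rewrite scalerN scalerA mulVf ?gt_eqF // scale1r.
- by have := le_scale_ord ordY li zhi; rewrite scalerA mulVf ?gt_eqF // scale1r.
Qed.

Lemma scalings_neq0 (z : Y) : scalings z !=set0.
Proof. by have [l l0 [zlo zhi]] := order_unit z; exists l; exact: scalings_mem. Qed.

Lemma minkowski_le (z : Y) (l : R) :
  0 < l -> le (- (l *: b)) z -> le z (l *: b) -> nm z <= l.
Proof. by move=> l0 zlo zhi; apply: ge_inf; [exists 0 => y [] | exact: scalings_mem]. Qed.

Lemma minkowski_ge0 (z : Y) : 0 <= nm z.
Proof. by apply: lb_le_inf => [|y []//]; exact: scalings_neq0. Qed.

Lemma minkowski_lt (z : Y) (r : R) : nm z < r -> le (- (r *: b)) z /\ le z (r *: b).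
Proof.
move=> /(inf_lt (scalings_neq0 z)) [l [l0 [a [[alo ahi] ->]]] lr].
have lrb := le_scalel_ord ordY b_ge0 (ltW lr).
split.
- apply: (le_trans_ord ordY (le_opp_ord ordY lrb)).
  by have := le_scale_ord ordY l0 alo; rewrite scalerN.
- exact (le_trans_ord ordY (le_scale_ord ordY l0 ahi) lrb).
Qed.

Lemma slt_le (x y : Y) : slt conv le x y -> le x y.
Proof. by move/sinterior_sub/(subr_ge0_ord ordY). Qed.

Lemma conv0_ev_bounded (ys : nat -> Y) (e : R) : conv ys 0 -> 0 < e ->
  exists N, forall n, (N <= n)%N -> le (- (e *: b)) (ys n) /\ le (ys n) (e *: b).
Proof.
move=> cy e0; have eb := Kint_scale convY ordY e0 Kint_b.
have c1 : conv (fun n => ys n + e *: b) (e *: b).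
  by have := conv_addr convY (e *: b) cy; rewrite add0r.
have c2 : conv (fun n => e *: b - ys n) (e *: b).
  by have := conv_addl convY (e *: b) (conv_opp convY cy); rewrite oppr0 addr0.
have [N1 H1] := conv_Kint_ev c1 eb; have [N2 H2] := conv_Kint_ev c2 eb.
exists (maxn N1 N2) => n; rewrite geq_max => /andP[/H1 lo /H2 hi]; split.
- by apply/(subr_ge0_ord ordY); rewrite opprK.
- exact/(subr_ge0_ord ordY).
Qed.

Lemma norm_open_order_open (U : set Y) : norm_open nm U -> order_open conv le U.
Proof.
move=> nmU x Ux; have [r [r0 ballU]] := nmU x Ux.
have r20 : 0 < r / 2 by rewrite divr_gt0.
have hint := Kint_scale convY ordY r20 Kint_b; set h := (r / 2) *: b in hint *.
have h0 : le 0 h by exact: sinterior_sub hint.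
exists (x - h), (x + h); split.
- rewrite /slt opprB addrC addrA subrK; apply (Kint_le convY ordY hint).
  by apply/(subr_ge0_ord ordY); rewrite addrK.
- by split; rewrite /slt; [rewrite opprB addrC subrK | rewrite addrC addKr].
- move=> y [/slt_le /(le_addr_ord ordY (- x)) lo /slt_le /(le_addr_ord ordY (- x)) hi].
  apply: ballU; apply: le_lt_trans (minkowski_le r20 _ _) _; last by lra.
  + by move: lo; rewrite addrAC subrr add0r.
  + by move: hi; rewrite addrAC subrr add0r.
Qed.

Lemma order_open_norm_open (U : set Y) : order_open conv le U -> norm_open nm U.
Proof.
move=> oU x Ux; have [a [c [_ [ax xc] intU]]] := oU x Ux.
have [N1 H1] := seq_open_sinterior (conv_subr_harmonic convY (x - a) b) ax.
have [N2 H2] := seq_open_sinterior (conv_subr_harmonic convY (c - x) b) xc.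
pose N := maxn N1 N2; exists (harmonic N); split; first exact: harmonic_gt0.
move=> y /minkowski_lt [lo hi]; apply: intU; split; rewrite /slt.
- apply (Kint_le convY ordY (H1 N (leq_maxl _ _))).
  have := le_addr_ord ordY (x - a) lo.
  by rewrite [- _ + _]addrC addrA subrK.
- apply (Kint_le convY ordY (H2 N (leq_maxr _ _))).
  have := le_addr_ord ordY (c - x) (le_opp_ord ordY hi).
  by rewrite [- _ + (c - x)]addrC [- (y - x) + _]addrC opprB addrA subrK.
Qed.

Lemma cvg_minkowski (xs : nat -> Y) (x : Y) :
  conv xs x -> (fun n => nm (xs n - x)) @ \oo --> 0.
Proof.
move=> cx; have cy : conv (fun n => xs n - x) 0.
  by have := conv_addr convY (- x) cx; rewrite subrr.
apply/cvgrPdist_le => e e0; have [N HN] := conv0_ev_bounded cy e0.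
exists N => // n /= /HN [lo hi].
by rewrite sub0r normrN ger0_norm ?minkowski_ge0 //; exact: minkowski_le.
Qed.

End OrderUnit.

Theorem theorem7p7 (R : realType) (Y : lmodType R)
  (conv : (nat -> Y) -> Y -> Prop) (le : Y -> Y -> Prop)
  (HY : solid_vector_space conv le) (b : Y) (hb : slt conv le 0 b) :
  let nm := minkowski_functional (ointerval_closed le (- b) b) in
  (forall U : set Y, norm_open nm U <-> order_open conv le U) /\
  (forall (xs : nat -> Y) (x : Y), conv xs x ->
     (fun n => nm (xs n - x)) @ \oo --> 0).
Proof.
case: HY => convY ordY _; split; last exact: cvg_minkowski.
by split; [exact: norm_open_order_open | exact: order_open_norm_open].
Qed.
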